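(* Let $A_m(x)=R_{2m}(x)$, $B_m(x)=R_{2m+1}(x)$ and $t=\frac{1+x+x^2}{2x}$. For every integer $m\ge1$, as identities of rational functions in $x$, \[ A_m(x)=x^{m-1}(1+x)U_m(t)-x^{m-2}(1+x+x^2)U_{m-1}(t), \] \[ B_m(x)=x^mU_m(t)+x^{m+2}U_{m-1}(t). \]
   Context: For $n\ge1$ let $\Xi_n$ be the poset on $\{x_1,\dots,x_n\}$ whose cover relations are exactly: $x_2\prec x_1$, $x_3\prec x_2$, and for $3\le i\le n-1$, $x_i\prec x_{i+1}$ if $i$ is odd and $x_{i+1}\prec x_i$ if $i$ is even (so $x_1>x_2>x_3<x_4>x_5<\cdots$). A filter of a poset is an up-closed subset. $\Omega_n$ is the lattice of filters of $\Xi_n$ under reverse inclusion; $\Omega_0$ is the one-element lattice. $R_n(x)=\sum_{F\in\Omega_n}x^{\,n-|F|}$ is the rank generating function of $\Omega_n$, with $R_0(x)=1$. $U_n$ are the Chebyshev polynomials of the second kind: $U_0(y)=1$, $U_1(y)=2y$, $U_n(y)=2yU_{n-1}(y)-U_{n-2}(y)$ for $n\ge2$. *)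

From mathcomp Require Import all_boot all_order all_algebra.
Set Implicit Arguments. Unset Strict Implicit. Unset Printing Implicit Defensive.
Import GRing.Theory Num.Theory.
Local Open Scope ring_scope.

(* Element x_{i+1} of Xi_n is represented by i : 'I_n (0-indexed).
   xi_cover_nat n a b (1-indexed labels a, b) : x_a is covered by x_b, i.e. x_a ≺ x_b. *)
Definition xi_cover_nat (n a b : nat) : bool :=
  [|| [&& a == 2, b == 1 & (2 <= n)%N],
      [&& a == 3, b == 2 & (3 <= n)%N],
      [&& (3 <= a)%N, odd a, b == a.+1 & (b <= n)%N]
    | [&& (3 <= b)%N, ~~ odd b, a == b.+1 & (a <= n)%N] ].

Definition xi_cover (n : nat) : rel 'I_n :=
  fun i j => xi_cover_nat n i.+1 j.+1.

Definition xi_le (n : nat) : rel 'I_n := connect (@xi_cover n).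

Definition is_filter (n : nat) (F : {set 'I_n}) : bool :=
  [forall i, forall j, (i \in F) && xi_le i j ==> (j \in F)].

Definition Rgen (K : pzRingType) (n : nat) (x : K) : K :=
  \sum_(F : {set 'I_n} | is_filter F) x ^+ (n - #|F|).

Fixpoint chebU (K : pzRingType) (n : nat) (y : K) : K :=
  match n with
  | 0 => 1
  | 1 => 2 * y
  | (k.+1 as n1).+1 => 2 * y * chebU n1 y - chebU k y
  end.

From mathcomp Require Import all_boot all_order all_algebra zify ring.
Set Implicit Arguments. Unset Strict Implicit. Unset Printing Implicit Defensive.
Import GRing.Theory Num.Theory.
Local Open Scope ring_scope.

(* Filters of the fence Xi_n are built by adding x_1, x_2, ... one at a time:
   whether x_{k+2} may join a filter depends only on whether x_{k+1} is in it
   and on the direction of the cover between them.  Splitting R_{k+1} according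
   to the membership of x_{k+1}, the two steps x_{2j+2} > x_{2j+3} < x_{2j+4}
   act on the pair (in, out) by the matrix [[1+x, x], [x^2, x^2]], whose trace
   is 1 + x + x^2 = 2xt and whose determinant is x^2.  By Cayley-Hamilton both
   components satisfy the recurrence V_{j+2} = 2xt V_{j+1} - x^2 V_j of
   V_j = x^j U_j(t), so they are fixed by their initial values; finally, for
   Xi_{2m+2} the "in" component is R_{2m+1} and the "out" one is x^2 R_{2m}. *)

Lemma is_filter_cover n (F : {set 'I_n}) :
  is_filter F = [forall i, forall j, xi_cover i j ==> (i \in F) ==> (j \in F)].
Proof.
apply/forallP/forallP => F_closed i; apply/forallP => j.
- apply/implyP => ij; apply/implyP => iF.
  by have := forallP (F_closed i) j; rewrite iF /xi_le connect1.
- apply/implyP => /andP[iF /connectP[p ij_path ->]].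
  elim: p i iF ij_path => [|a p IHp] i iF //= /andP[ia a_path].
  by apply: IHp a_path; have := forallP (F_closed i) a; rewrite ia iF.
Qed.

Lemma xi_cover_adjacent n a b : xi_cover_nat n a b -> (b == a.+1) || (a == b.+1).
Proof.
case/or4P.
- by case/and3P => /eqP-> /eqP->.
- by case/and3P => /eqP-> /eqP->.
- by case/and4P => _ _ /eqP->; rewrite eqxx.
- by case/and4P => _ _ /eqP->; rewrite eqxx orbT.
Qed.

Lemma xi_cover_natS n a b : (a <= n)%N -> (b <= n)%N ->
  xi_cover_nat n.+1 a b = xi_cover_nat n a b.
Proof.
move=> an bn; rewrite /xi_cover_nat (leqW an) (leqW bn) an bn.
by case: a an => [|[|[|[|a]]]] an //=; rewrite an (leqW an).
Qed.

Definition xi_up k : bool := xi_cover_nat k.+2 k.+1 k.+2.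

Lemma xi_upE k : xi_up k = (0 < k)%N && ~~ odd k.
Proof.
rewrite /xi_up /xi_cover_nat; case: k => [|[|k]] //=.
by case: (odd k) => /=; rewrite ?andbF // eqxx leqnn orbT.
Qed.

Lemma xi_downE k : xi_cover_nat k.+2 k.+2 k.+1 = ~~ xi_up k.
Proof.
rewrite xi_upE /xi_cover_nat; case: k => [|[|k]] //=.
by case: (odd k) => //=; rewrite eqxx leqnn orbT.
Qed.

Lemma xi_cover_lift k (i j : 'I_k) :
  xi_cover (lift ord_max i) (lift ord_max j) = xi_cover i j.
Proof. by rewrite /xi_cover !lift_max xi_cover_natS. Qed.

Lemma xi_cover_to_max k (i : 'I_k.+1) :
  xi_cover (lift ord_max i) (ord_max : 'I_k.+2) = (i == ord_max) && xi_up k.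
Proof.
rewrite /xi_cover lift_max; have [->|i_neq] := eqVneq i ord_max; first done.
have i_lt : (i < k)%N by move: (ltn_ord i) i_neq; rewrite -val_eqE /=; lia.
by apply/negbTE/negP => /xi_cover_adjacent; rewrite !eqSS /=; case/orP => /eqP; lia.
Qed.

Lemma xi_cover_from_max k (i : 'I_k.+1) :
  xi_cover (ord_max : 'I_k.+2) (lift ord_max i) = (i == ord_max) && ~~ xi_up k.
Proof.
rewrite /xi_cover lift_max; have [->|i_neq] := eqVneq i ord_max; first exact: xi_downE.
have i_lt : (i < k)%N by move: (ltn_ord i) i_neq; rewrite -val_eqE /=; lia.
by apply/negbTE/negP => /xi_cover_adjacent; rewrite !eqSS /=; case/orP => /eqP; lia.
Qed.

Lemma xi_cover_max_max k : xi_cover (ord_max : 'I_k.+1) ord_max = false.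
Proof. by apply/negbTE/negP => /xi_cover_adjacent; rewrite orbb => /eqP/n_Sn. Qed.

Lemma forall_ord_max n (P : pred 'I_n.+1) :
  [forall i, P i] = [forall i : 'I_n, P (lift ord_max i)] && P ord_max.
Proof.
apply/forallP/andP => [P_all | [/forallP P_lift P_max] i].
  by split; [apply/forallP => i|]; apply: P_all.
by case: (unliftP ord_max i) => [j ->|->].
Qed.

Definition extset k (A : {set 'I_k}) (b : bool) : {set 'I_k.+1} :=
  [set i | if unlift ord_max i is Some j then j \in A else b].

Lemma in_extset_lift k (A : {set 'I_k}) b j : (lift ord_max j \in extset A b) = (j \in A).
Proof. by rewrite inE liftK. Qed.

Lemma in_extset_max k (A : {set 'I_k}) b : (ord_max \in extset A b) = b.
Proof. by rewrite inE unlift_none. Qed.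

Lemma extset_bij k : bijective (fun p : {set 'I_k} * bool => extset p.1 p.2).
Proof.
exists (fun S : {set 'I_k.+1} => ([set j | lift ord_max j \in S], ord_max \in S)).
  by case=> A b; rewrite in_extset_max; congr pair; apply/setP => j; rewrite inE in_extset_lift.
move=> S; apply/setP => i; rewrite !inE.
by case: unliftP => [j ->|->]; rewrite ?inE.
Qed.

Lemma card_extset k (A : {set 'I_k}) b : #|extset A b| = (#|A| + b)%N.
Proof.
rewrite -!sum1_card [LHS]big_mkcond [X in (X + _)%N]big_mkcond big_ord_recr /= in_extset_max.
congr (_ + _)%N; apply: eq_bigr => i _.
by rewrite (_ : widen_ord _ i = lift ord_max i) ?in_extset_lift //; exact/val_inj/esym/lift_max.
Qed.

Lemma big_extset (R : nmodType) k (F : {set 'I_k.+1} -> R) :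
  \sum_S F S = \sum_(A : {set 'I_k}) \sum_(b : bool) F (extset A b).
Proof. by rewrite pair_bigA [LHS](reindex _ (onW_bij _ (extset_bij k))). Qed.

(* The memberships d of x_{k+1} and c of x_{k+2} allowed in a filter. *)
Definition xi_link k (d c : bool) : bool := if xi_up k then d ==> c else c ==> d.

Lemma is_filter_extset k (A : {set 'I_k.+1}) b :
  is_filter (extset A b) = is_filter A && xi_link k (ord_max \in A) b.
Proof.
rewrite !is_filter_cover /xi_link [in LHS]forall_ord_max.
apply/andP/andP => [[/forallP E_lift /forallP E_max] | [/forallP A_closed A_link]].
  split.
    apply/forallP => i; apply/forallP => j.
    by move: (E_lift i) => /forallP/(_ (lift ord_max j)); rewrite xi_cover_lift !in_extset_lift.
  move: (E_lift ord_max) (E_max (lift ord_max ord_max)) => /forallP/(_ ord_max).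
  rewrite xi_cover_to_max xi_cover_from_max eqxx !in_extset_lift in_extset_max.
  by case: (xi_up k).
split.
  apply/forallP => i; apply/forallP => j; case: (unliftP ord_max j) => [j' ->|->].
    by rewrite xi_cover_lift !in_extset_lift; apply: (forallP (A_closed i)).
  rewrite xi_cover_to_max in_extset_lift in_extset_max.
  by case: eqP => // ->; move: A_link; case: (xi_up k).
apply/forallP => j; case: (unliftP ord_max j) => [j' ->|->]; last by rewrite xi_cover_max_max.
rewrite xi_cover_from_max in_extset_lift in_extset_max.
by case: eqP => // ->; move: A_link; case: (xi_up k).
Qed.

Definition Rlast (K : pzRingType) k (c : bool) (x : K) : K :=
  \sum_(S : {set 'I_k.+1} | is_filter S && ((ord_max \in S) == c)) x ^+ (k.+1 - #|S|).

Lemma Rgen_Rlast (K : pzRingType) k (x : K) : Rgen k.+1 x = Rlast k true x + Rlast k false x.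
Proof.
rewrite /Rgen (bigID (fun S : {set 'I_k.+1} => ord_max \in S)) /=.
by congr (_ + _); apply: eq_bigl => S; case: (ord_max \in S); rewrite ?andbT ?andbF.
Qed.

Lemma Rlast0 (K : pzRingType) c (x : K) : Rlast 0 c x = if c then 1 else x.
Proof.
have filter1 (S : {set 'I_1}) : is_filter S.
  by rewrite is_filter_cover; apply/forallP => i; apply/forallP => j; rewrite !ord1.
rewrite /Rlast (big_pred1 (if c then setT else set0)) => [|S].
  by case: c; rewrite ?cardsT ?cards0 ?card_ord.
rewrite filter1 /=; apply/eqP/eqP => [S_c|->]; last by case: c; rewrite ?inE.
apply/setP => i; have -> : i = ord_max by apply: val_inj; rewrite (ord1 i).
by rewrite -S_c; case: (ord_max \in S); rewrite ?inE.
Qed.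

Lemma RlastS (K : pzRingType) k c (x : K) :
  Rlast k.+1 c x = (if c then 1 else x) * \sum_(d | xi_link k d c) Rlast k d x.
Proof.
have -> : \sum_(d | xi_link k d c) Rlast k d x =
    \sum_(A : {set 'I_k.+1} | is_filter A && xi_link k (ord_max \in A) c) x ^+ (k.+1 - #|A|).
  rewrite [RHS](partition_big (fun A : {set _} => ord_max \in A) (xi_link k ^~ c)).
    apply: eq_bigr => d link_d; apply: eq_bigl => A.
    by case: eqP => [->|_]; rewrite ?link_d ?andbT ?andbF.
  by move=> A /andP[].
rewrite mulr_sumr /Rlast big_mkcond big_extset [RHS]big_mkcond; apply: eq_bigr => A _.
rewrite big_mkcond big_bool /= !is_filter_extset !in_extset_max !card_extset.
have A_le : (#|A| <= k.+1)%N by rewrite -[X in (_ <= X)%N]card_ord max_card.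
case: c => /=; rewrite ?eqxx ?andbT ?andbF ?addr0 ?add0r.
  by rewrite addn1 subSS mul1r.
by rewrite addn0 subSn // exprS.
Qed.

Lemma Rlast_up (K : pzRingType) k (x : K) : xi_up k ->
  Rlast k.+1 true x = Rgen k.+1 x /\ Rlast k.+1 false x = x * Rlast k false x.
Proof.
move=> up_k; rewrite !RlastS /xi_link up_k.
by split; rewrite big_mkcond big_bool /= ?mul1r ?add0r -?Rgen_Rlast.
Qed.

Lemma Rlast_down (K : pzRingType) k (x : K) : ~~ xi_up k ->
  Rlast k.+1 true x = Rlast k true x /\ Rlast k.+1 false x = x * Rgen k.+1 x.
Proof.
move=> /negbTE down_k; rewrite !RlastS /xi_link down_k.
by split; rewrite big_mkcond big_bool /= ?mul1r ?addr0 -?Rgen_Rlast.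
Qed.

Lemma xi_up_even j : xi_up (2 * j).+2.
Proof. by rewrite xi_upE /= mul2n odd_double. Qed.

Lemma xi_up_odd j : ~~ xi_up (2 * j).+1.
Proof. by rewrite xi_upE /= mul2n odd_double. Qed.

Lemma Rlast1 (K : pzRingType) (x : K) : Rlast 1 true x = 1 /\ Rlast 1 false x = x + x ^+ 2.
Proof.
have [-> ->] := Rlast_down x (isT : ~~ xi_up 0).
by rewrite Rgen_Rlast !Rlast0 mulrDr mulr1 expr2.
Qed.

Lemma Rlast_odd (K : pzRingType) j (x : K) :
  Rlast (2 * j).+3 true x = Rgen (2 * j).+3 x /\
  Rlast (2 * j).+3 false x = x ^+ 2 * Rgen (2 * j).+2 x.
Proof.
have [-> ->] := Rlast_up x (xi_up_even j).
by have [_ ->] := Rlast_down x (xi_up_odd j); rewrite mulrA -expr2.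
Qed.

Lemma Rlast_transfer (K : pzRingType) j (x : K) :
  Rlast (2 * j).+3 true x =
    (1 + x) * Rlast (2 * j).+1 true x + x * Rlast (2 * j).+1 false x /\
  Rlast (2 * j).+3 false x = x ^+ 2 * (Rlast (2 * j).+1 true x + Rlast (2 * j).+1 false x).
Proof.
have [-> ->] := Rlast_odd j x; have [down_true down_false] := Rlast_down x (xi_up_odd j).
by rewrite Rgen_Rlast down_true down_false !Rgen_Rlast mulrDl mul1r mulrDr addrA.
Qed.

Lemma chebU_scaledSS (R : comPzRingType) (x y : R) k :
  x ^+ k.+2 * chebU k.+2 y =
    2 * x * y * (x ^+ k.+1 * chebU k.+1 y) - x ^+ 2 * (x ^+ k * chebU k y).
Proof. by rewrite /= !exprS; ring. Qed.

Section ClosedForm.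
Variables (K : numFieldType) (x : K).
Hypothesis x_neq0 : x != 0.
Let s := 1 + x + x ^+ 2.
Let t := s / (2 * x).
Let V k := x ^+ k * chebU k t.

Lemma two_x_t : 2 * x * t = s.
Proof. by rewrite /t mulrC mulfVK // mulf_neq0 ?pnatr_eq0. Qed.

Lemma V1 : V 1 = s.
Proof. by rewrite /V /= expr1 mulrA (mulrC x) two_x_t. Qed.

Lemma V_rec k : V k.+2 = s * V k.+1 - x ^+ 2 * V k.
Proof. by rewrite /V chebU_scaledSS two_x_t. Qed.

Lemma Rlast_closed j :
  Rlast (2 * j).+3 true x = V j.+1 + x ^+ 3 * V j /\
  Rlast (2 * j).+3 false x = (x + x ^+ 2) * V j.+1 - x * s * V j.
Proof.
elim: j => [|j [IH_true IH_false]].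
  have [a0 b0] := Rlast1 x; have [-> ->] := Rlast_transfer 0 x.
  by rewrite a0 b0 V1 /V /s /=; split; ring.
have [-> ->] := Rlast_transfer j.+1 x.
by rewrite mulnS add2n IH_true IH_false V_rec /s; split; ring.
Qed.

End ClosedForm.

Theorem mainTheorem5 (K : numFieldType) (m : nat) (x : K) :
  (1 <= m)%N -> x != 0 ->
  let t := (1 + x + x ^+ 2) / (2 * x) in
  Rgen (2 * m) x =
    x ^ (m%:Z - 1) * (1 + x) * chebU m t
    - x ^ (m%:Z - 2) * (1 + x + x ^+ 2) * chebU m.-1 t
  /\
  Rgen (2 * m).+1 x =
    x ^+ m * chebU m t + x ^+ (m + 2) * chebU m.-1 t.
Proof.
move=> m_gt0 x_neq0 t; case: m m_gt0 => [//|j] _; rewrite succnK.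
have [closed_true closed_false] := Rlast_closed x_neq0 j; rewrite -/t in closed_true closed_false.
have [Rgen_odd Rgen_even] := Rlast_odd j x.
have expz_natB k : x ^ ((j.+1)%:Z - k%:Z) = x ^+ j.+1 / x ^+ k.
  by rewrite expfzDr // exprnN.
rewrite (expz_natB 1) (expz_natB 2) mulnS add2n; split.
- apply: (mulfI (expf_neq0 2 x_neq0)); rewrite -Rgen_even closed_false [x ^+ j.+1]exprS.
  by field.
- by rewrite -Rgen_odd closed_true exprD [x ^+ j.+1]exprS; ring.
Qed.
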